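(* Let $T$ be a rooted binary tree with black/white-coloured leaves and the induced node colouring and classification as described in the context. Any SPR operation on $T$ belonging to the class $(\mathrm{B},\mathrm{r},\mathrm{W},\ast)$ or $(\mathrm{B},\mathrm{r},\mathrm{G},\ast)$ does not reduce the number of maximal black subtrees, i.e. the resulting tree has at least as many maximal black subtrees as $T$.
   Context: All trees are rooted binary trees; every non-leaf node has exactly two children and every non-root node $n$ has a parent $\mathrm{pa}(n)$. A ''subtree'' always means a node together with all of its descendants. Colouring: each leaf is coloured black (B) or white (W); an internal node is black if both children are black, white if both children are white, and grey (G) otherwise. A subtree is black (resp. white) if all its nodes are black (resp. white); it is maximal if no strictly larger subtree containing it is black (resp. white). Classification: a black or white node is of type ''r'' if it is the root of a maximal subtree of its own colour, and of type ''b'' otherwise; all grey nodes are of type ''b'' by convention. SPR operation $(u,v)$ on $T$: $u$ is a non-root node, $v$ is a node with $v\notin\{u,\mathrm{pa}(u)\}$ and $v$ not a descendant of $u$; the subtree rooted at $u$ is pruned (the edge to $u$ is removed and $\mathrm{pa}(u)$ deleted, its other child taking its place), then regrafted by inserting a new node on the edge from $v$ to its parent (or as a new root above $v$ if $v$ is the root) whose two children are $v$ and $u$; colours of the resulting tree are recomputed by the same rule. The operation belongs to class $(x,y,z,w)$ where $x,z\in\{\mathrm{B},\mathrm{W},\mathrm{G}\}$ are the colours in $T$ of $u$ and $v$, and $y,w\in\{\mathrm{r},\mathrm{b}\}$ their classifications in $T$; $\ast$ denotes any value. *)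

From HB Require Import structures.
From mathcomp Require Import all_boot.
Set Implicit Arguments. Unset Strict Implicit. Unset Printing Implicit Defensive.

(** Rooted binary trees whose leaves carry a colour: [true] = black, [false] = white.
    Nodes are identified by their position: the path from the root
    ([false] = go to left child, [true] = go to right child). *)
Inductive tree := Leaf of bool | Node of tree & tree.

Inductive colour := B | W | G.

Definition colour_eqb (a b : colour) : bool :=
  match a, b with B, B | W, W | G, G => true | _, _ => false end.
Lemma colour_eqP : Equality.axiom colour_eqb.
Proof. by case; case; constructor. Qed.
HB.instance Definition _ := hasDecEq.Build colour colour_eqP.

Fixpoint tcolour (t : tree) : colour :=
  match t with
  | Leaf true => B
  | Leaf false => W
  | Node l r =>
      match tcolour l, tcolour r with
      | B, B => B
      | W, W => W
      | _, _ => G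
      end
  end.

Fixpoint sub (t : tree) (p : seq bool) : option tree :=
  match p, t with
  | [::], _ => Some t
  | false :: p', Node l _ => sub l p'
  | true :: p', Node _ r => sub r p'
  | _ :: _, Leaf _ => None
  end.

Fixpoint nodes (t : tree) : seq (seq bool) :=
  [::] :: match t with
          | Leaf _ => [::]
          | Node l r => map (cons false) (nodes l) ++ map (cons true) (nodes r)
          end.

Definition ncolour (t : tree) (p : seq bool) : option colour :=
  omap tcolour (sub t p).

Definition mono (c : colour) (t : tree) (p : seq bool) : bool :=
  match sub t p with
  | Some s => all (fun q => ncolour s q == Some c) (nodes s)
  | None => false
  end.

Definition maximal_mono (c : colour) (t : tree) (p : seq bool) : bool :=
  mono c t p &&
  all (fun q => (prefix q p && (q != p)) ==> ~~ mono c t q) (nodes t).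

Definition type_r (t : tree) (p : seq bool) : bool :=
  match ncolour t p with
  | Some B => maximal_mono B t p
  | Some W => maximal_mono W t p
  | _ => false
  end.

Definition n_max_black (t : tree) : nat := count (maximal_mono B t) (nodes t).

Definition pa (p : seq bool) : seq bool := take (size p).-1 p.

(** pruning the subtree at u (u non-root): the parent of u is deleted and
    the sibling of u takes its place *)
Fixpoint prune (t : tree) (u : seq bool) : tree :=
  match u, t with
  | [:: b], Node l r => if b then l else r
  | b :: u', Node l r => if b then Node l (prune r u') else Node (prune l u') r
  | _, _ => t
  end.

(** position in the pruned tree of a node v of t (v not in the pruned
    subtree and v <> pa u) *)
Fixpoint prune_pos (u v : seq bool) : seq bool :=
  match u, v with
  | [:: _], _ :: v' => v'
  | b :: u', c :: v' => if b == c then c :: prune_pos u' v' else v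
  | _, _ => v
  end.

(** regrafting s: insert a new node on the edge above w (or a new root if
    w is the root), whose two children are (the subtree at) w and s *)
Fixpoint graft (t : tree) (w : seq bool) (s : tree) : tree :=
  match w, t with
  | [::], _ => Node t s
  | b :: w', Node l r => if b then Node l (graft r w' s) else Node (graft l w' s) r
  | _ :: _, Leaf _ => t
  end.

Definition spr_ok (t : tree) (u v : seq bool) : Prop :=
  [/\ u \in nodes t, u != [::], v \in nodes t, v != pa u & ~~ prefix u v].

Definition spr (t : tree) (u v : seq bool) : tree :=
  match sub t u with
  | Some s => graft (prune t u) (prune_pos u v) s
  | None => t
  end.

From mathcomp Require Import all_boot.

Set Implicit Arguments.
Unset Strict Implicit.
Unset Printing Implicit Defensive.

(* Count the maximal subtrees of a colour c recursively: 1 at a node of colour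
   c, otherwise the sum over the two children.  Let u root a maximal black
   subtree and v a non-black node.  As pa u is not black, neither is the
   sibling of u, so pruning u removes exactly one maximal black subtree and
   keeps every remaining ancestor non-black; v still roots a non-black subtree
   of the pruned tree.  Regrafting the black subtree above it creates a grey
   node, so u is maximal again and no other node becomes black: the SPR move
   preserves the number of maximal black subtrees. *)

Section MaximalMonochromatic.

(* Leaves are never grey, so only black and white subtrees are monochromatic. *)
Variable c : colour.
Hypothesis c_neqG : c != G.

Lemma eq_tcolour_Node l r :
  (tcolour (Node l r) == c) = (tcolour l == c) && (tcolour r == c).
Proof.
by move: c_neqG; case: c => //= _; case: (tcolour l); case: (tcolour r).
Qed.

Lemma all_ncolour t :
  all (fun q => ncolour t q == Some c) (nodes t) = (tcolour t == c).
Proof.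
elim: t => [b|l IHl r IHr]; first by rewrite /= andbT.
rewrite [nodes _]/= [all _ _]/= all_cat !all_map.
rewrite [all _ (nodes l)]IHl [all _ (nodes r)]IHr -eq_tcolour_Node.
by rewrite (_ : ncolour _ [::] == _ = (tcolour (Node l r) == c)) // andbb.
Qed.

Lemma ncolour_nil t : ncolour t [::] = Some (tcolour t).
Proof. by case: t. Qed.

Lemma monoE t p : mono c t p = (ncolour t p == Some c).
Proof.
by rewrite /mono /ncolour; case: (sub t p) => //= s; rewrite all_ncolour.
Qed.

Lemma maximal_mono_nil t : maximal_mono c t [::] = (tcolour t == c).
Proof.
rewrite /maximal_mono monoE.
have -> : all (fun q => prefix q [::] && (q != [::]) ==> ~~ mono c t q)
               (nodes t).
  by apply/allP => q _; rewrite prefixs0 andbN.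
by rewrite andbT ncolour_nil.
Qed.

Lemma maximal_mono_cons l r b p :
  maximal_mono c (Node l r) (b :: p) =
  (tcolour (Node l r) != c) && maximal_mono c (if b then r else l) p.
Proof.
have mono_cons q : mono c (Node l r) (b :: q) = mono c (if b then r else l) q.
  by case: b.
rewrite /maximal_mono [nodes _]/= [all _ (_ :: _)]/= all_cat !all_map.
rewrite mono_cons [mono c _ [::]]monoE ncolour_nil.
case: b mono_cons => mono_cons.
- rewrite (_ : all _ (nodes l) = true); last by apply/allP.
  rewrite (eq_all (a2 := fun q => prefix q p && (q != p) ==> ~~ mono c r q)).
    by rewrite andTb andbCA.
  by move=> q /=; rewrite mono_cons.
- rewrite (_ : all _ (nodes r) = true); last by apply/allP.
  rewrite (eq_all (a2 := fun q => prefix q p && (q != p) ==> ~~ mono c l q)).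
    by rewrite andbT andbCA.
  by move=> q /=; rewrite mono_cons.
Qed.

Fixpoint nmaximal (t : tree) : nat :=
  if tcolour t == c then 1
  else if t is Node l r then nmaximal l + nmaximal r else 0.

Lemma nmaximal_root t : tcolour t == c -> nmaximal t = 1.
Proof. by case: t => [b|l r] /= ->. Qed.

Lemma nmaximal_Node l r : tcolour (Node l r) != c ->
  nmaximal (Node l r) = nmaximal l + nmaximal r.
Proof. by rewrite [nmaximal _]/= => /negbTE ->. Qed.

Lemma count_maximal_mono t : count (maximal_mono c t) (nodes t) = nmaximal t.
Proof.
elim: t => [b|l IHl r IHr]; first by rewrite /= maximal_mono_nil addn0.
rewrite [nodes _]/= [count _ (_ :: _)]/= count_cat !count_map maximal_mono_nil.
have [tc|tNc] := eqVneq (tcolour (Node l r)) c.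
  rewrite nmaximal_root ?tc // !(@eq_count _ _ pred0) ?count_pred0 // => q /=;
    by rewrite maximal_mono_cons tc eqxx.
rewrite add0n nmaximal_Node // -IHl -IHr.
by congr (_ + _); apply: eq_count => q /=; rewrite maximal_mono_cons tNc.
Qed.

Lemma prune_Node l r b u : u != [::] ->
  prune (Node l r) (b :: u) =
  if b then Node l (prune r u) else Node (prune l u) r.
Proof. by case: u. Qed.

Lemma tcolour_prune t u : u != [::] -> maximal_mono c t u ->
  tcolour (prune t u) != c.
Proof.
elim: u t => [|b u IHu] // [d|l r] _; first by case: b.
rewrite maximal_mono_cons => /andP [tNc maxu].
case: u IHu maxu => [|b' u] IHu maxu.
  rewrite maximal_mono_nil in maxu; move: tNc; rewrite eq_tcolour_Node.
  by case: b maxu => /= ->; rewrite ?andbT.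
rewrite prune_Node //; case: b maxu => /(IHu _ isT) pNc;
  by rewrite eq_tcolour_Node (negbTE pNc) ?andbF.
Qed.

Lemma nmaximal_prune t u : u != [::] -> maximal_mono c t u ->
  nmaximal t = (nmaximal (prune t u)).+1.
Proof.
elim: u t => [|b u IHu] // [d|l r] _; first by case: b.
move=> maxbu; have pNc := tcolour_prune (u := b :: u) isT maxbu.
move: maxbu; rewrite maximal_mono_cons => /andP [tNc maxu].
rewrite nmaximal_Node //.
case: u IHu maxu pNc => [|b' u] IHu maxu pNc.
  rewrite maximal_mono_nil in maxu.
  by case: b maxu pNc => /nmaximal_root -> _; rewrite ?addn1 ?add1n.
rewrite prune_Node // in pNc *.
case: b maxu pNc => /(IHu _ isT) IH pNc;
  by rewrite nmaximal_Node // IH ?addnS ?addSn.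
Qed.

Definition off_colour (t : tree) (w : seq bool) : bool :=
  if ncolour t w is Some d then d != c else false.

Lemma off_colour_cons l r b w :
  off_colour (Node l r) (b :: w) = off_colour (if b then r else l) w.
Proof. by case: b. Qed.

Lemma off_colour_root t w : off_colour t w -> tcolour t != c.
Proof.
elim: w t => [|b w IHw] t; first by rewrite /off_colour ncolour_nil.
case: t => [d|l r]; first by case: b.
rewrite off_colour_cons eq_tcolour_Node => /IHw.
by case: b => /negbTE ->; rewrite ?andbF.
Qed.

Lemma prune_pos_cons b b' u v : u != [::] ->
  prune_pos (b :: u) (b' :: v) =
  if b == b' then b' :: prune_pos u v else b' :: v.
Proof. by case: u. Qed.

Lemma pa_cons b u : u != [::] -> pa (b :: u) = b :: pa u.
Proof. by case: u. Qed.

Lemma off_colour_prune_pos t u v : u != [::] -> maximal_mono c t u ->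
  ~~ prefix u v -> v != pa u -> off_colour t v ->
  off_colour (prune t u) (prune_pos u v).
Proof.
elim: u t v => [|b u IHu] // [d|l r] v _; first by case: b.
move=> maxbu; have pNc := tcolour_prune (u := b :: u) isT maxbu.
move: maxbu; rewrite maximal_mono_cons => /andP [_ maxu].
case: u IHu maxu pNc => [|b0 u] IHu maxu pNc.
  case: v => [|b' v] //; rewrite prefix_cons prefix0s andbT => bNb' _.
  by case: b b' bNb' {maxu pNc} => [] [].
case: v => [_ _ _|b' v]; first by rewrite /off_colour ncolour_nil.
rewrite prune_Node // prune_pos_cons // pa_cons // prefix_cons eqseq_cons.
case: eqVneq => [<-|bNb' _ _]; rewrite off_colour_cons.
  rewrite !andTb => uNv vNpa.
  case: b maxu pNc => /(IHu _ v isT) IH _;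
    by rewrite off_colour_cons; apply: IH.
by case: b b' bNb' {maxu pNc} => [] [].
Qed.

Lemma graft_nil t s : graft t [::] s = Node t s.
Proof. by case: t. Qed.

Lemma tcolour_graft t w s : tcolour s == c -> off_colour t w ->
  tcolour (graft t w s) = G.
Proof.
move=> sc; elim: w t => [|b w IHw] t.
  rewrite graft_nil /off_colour ncolour_nil.
  by move: c_neqG sc; case: c => //= _; case: (tcolour s); case: (tcolour t).
case: t => [d|l r]; first by case: b.
by rewrite off_colour_cons; case: b => /IHw /= ->; case: (tcolour _).
Qed.

Lemma tcolour_graft_neq t w s : tcolour s == c -> off_colour t w ->
  tcolour (graft t w s) != c.
Proof. by move=> sc wNc; rewrite (tcolour_graft sc wNc) eq_sym. Qed.

Lemma nmaximal_graft t w s : tcolour s == c -> off_colour t w ->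
  nmaximal (graft t w s) = (nmaximal t).+1.
Proof.
move=> sc; elim: w t => [|b w IHw] t wNc; have := tcolour_graft_neq sc wNc.
  by rewrite graft_nil => /nmaximal_Node ->; rewrite (nmaximal_root sc) addn1.
case: t wNc => [d|l r]; first by case: b.
move=> wNc; rewrite nmaximal_Node ?(off_colour_root wNc) //.
rewrite off_colour_cons in wNc.
by case: b wNc => /IHw IH /nmaximal_Node ->; rewrite IH ?addnS ?addSn.
Qed.

Lemma nmaximal_spr t u v : u != [::] -> v != pa u -> ~~ prefix u v ->
  maximal_mono c t u -> off_colour t v -> nmaximal (spr t u v) = nmaximal t.
Proof.
move=> uN0 vNpa uNv maxu vNc.
have := off_colour_prune_pos uN0 maxu uNv vNpa vNc.
move: (nmaximal_prune uN0 maxu) (maxu).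
rewrite /maximal_mono monoE /ncolour /spr.
by case: (sub t u) => [s|] //= -> /andP [sc _] /(nmaximal_graft sc) ->.
Qed.

End MaximalMonochromatic.

Theorem lemma1 (t : tree) (u v : seq bool) :
  spr_ok t u v ->
  ncolour t u = Some B -> type_r t u ->
  (ncolour t v = Some W \/ ncolour t v = Some G) ->
  n_max_black t <= n_max_black (spr t u v).
Proof.
case=> _ uN0 _ vNpa uNv uB; rewrite /type_r uB => maxu vWG.
have vNB : off_colour B t v by rewrite /off_colour; case: vWG => ->.
by rewrite /n_max_black !count_maximal_mono // (nmaximal_spr (c := B)).
Qed.
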